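(* The following randomized mechanism for a combinatorial auction with item set $M$ and bidder set $N$ is universally obviously strategy-proof. Index the bidders in an arbitrary fixed order. Independently place each bidder in a set $S$ with probability $1/2$ and in a set $U$ otherwise. Bidders in $S$ receive nothing and pay nothing, and report their value for each item. For each item $j$, set price $p_j=\max_{i\in S}v_{ij}$ and let $n(j)$ be the smallest index among bidders in $\arg\max_{i\in S}v_{ij}$. Then, for each $i\in U$ in an arbitrary order, bidder $i$ purchases (paying $p_j$ for each) all previously unsold items $j$ for which either $v_{ij}>p_j$, or $v_{ij}=p_j$ and $i$ has a lower index than $n(j)$.
   Context: Bidders have additive valuations: bidder $i$ has private values $v_{ij}\ge0$ for items $j\in M$, and $v_i(A)=\sum_{j\in A}v_{ij}$; utilities are quasi-linear. In the mechanism, bidders in $U$ act by choosing which available items to purchase (equivalently, reporting which items they accept at the posted prices). A deterministic mechanism is a rooted tree: each internal node is assigned to one bidder, who sends one of the messages labeling the outgoing edges; each leaf is labeled with a feasible allocation and payments. A behavior $B_i$ specifies a message at every node of bidder $i$; a profile $B$ determines a root-to-leaf path $\mathrm{Path}(B)$ with bundle $f_i(B)$ and payment $p_i(B)$ for $i$. A strategy $\mathcal S_i$ maps each valuation $v_i$ in the domain to a behavior; it is obviously dominant if for every $v_i$, every node $u$ of $i$, every $B_{-i}$ and every profile $B'$ with $u\in\mathrm{Path}(\mathcal S_i(v_i),B_{-i})\cap\mathrm{Path}(B')$ and $B'_i$ sending at $u$ a message different from $\mathcal S_i(v_i)$'s, $v_i(f_i(\mathcal S_i(v_i),B_{-i}))-p_i(\mathcal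 S_i(v_i),B_{-i})\ge v_i(f_i(B'))-p_i(B')$. A deterministic mechanism is OSP if it has obviously dominant strategies for all bidders; a randomized mechanism (a distribution over deterministic mechanisms with strategies) is universally OSP if every mechanism in its support is OSP. *)

From HB Require Import structures.
From mathcomp Require Import all_boot all_order all_algebra.
Set Implicit Arguments. Unset Strict Implicit. Unset Printing Implicit Defensive.
Import Order.TTheory GRing.Theory Num.Theory.
Local Open Scope ring_scope.

(* A node is identified with the history (sequence of messages sent    *)
(* along the root-to-node path).  Each internal node is assigned to a  *)
(* bidder and has a (boolean) set of legal messages labelling its      *)
(* outgoing edges, and a child for each message.                       *)
Section Tree.
Variables (R : realFieldType) (n m : nat) (Msg : Type).

Inductive mtree : Type :=
| Leaf of ('I_n -> {set 'I_m}) & ('I_n -> R)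
| Node of 'I_n & (Msg -> bool) & (Msg -> mtree). (* owner, legal msgs, children *)

Definition behavior := seq Msg -> Msg.
Definition profile := 'I_n -> behavior.

Fixpoint node_at (t : mtree) (h : seq Msg) : option mtree :=
  match h with
  | [::] => Some t
  | x :: h' =>
      match t with
      | Leaf _ _ => None
      | Node _ leg nx => if leg x then node_at (nx x) h' else None
      end
  end.

Definition valid_beh (t : mtree) (i : 'I_n) (b : behavior) : Prop :=
  forall h i' leg nx, node_at t h = Some (Node i' leg nx) -> i' = i -> leg (b h).

Fixpoint play (t : mtree) (B : profile) (h : seq Msg)
  : seq Msg * (('I_n -> {set 'I_m}) * ('I_n -> R)) :=
  match t with
  | Leaf a p => ([::], (a, p))
  | Node i _ nx => let x := B i h in
                   let r := play (nx x) B (rcons h x) in (x :: r.1, r.2)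
  end.

Definition path_of (t : mtree) (B : profile) : seq Msg := (play t B [::]).1.
Definition bundle (t : mtree) (B : profile) (i : 'I_n) : {set 'I_m} :=
  (play t B [::]).2.1 i.
Definition payment (t : mtree) (B : profile) (i : 'I_n) : R :=
  (play t B [::]).2.2 i.

Definition on_path (t : mtree) (B : profile) (h : seq Msg) : Prop :=
  exists s, path_of t B = h ++ s.

Definition utility (t : mtree) (v : 'I_m -> R) (i : 'I_n) (B : profile) : R :=
  \sum_(j in bundle t B i) v j - payment t B i.

Definition upd (B : profile) (i : 'I_n) (b : behavior) : profile :=
  fun k => if k == i then b else B k.

Definition in_domain (v : 'I_m -> R) : Prop := forall j, 0 <= v j.

Definition strategy := 'I_n -> ('I_m -> R) -> behavior.

Definition obviously_dominant (t : mtree) (st : strategy) : Prop :=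
  (forall i v, in_domain v -> valid_beh t i (st i v)) /\
  (forall i v, in_domain v ->
   forall h leg nx, node_at t h = Some (Node i leg nx) ->
   forall B B' : profile,
     (forall k, k != i -> valid_beh t k (B k)) ->
     (forall k, valid_beh t k (B' k)) ->
     on_path t (upd B i (st i v)) h ->
     on_path t B' h ->
     B' i h <> st i v h ->
     utility t v i B' <= utility t v i (upd B i (st i v))).

Definition OSP (t : mtree) : Prop := exists st, obviously_dominant t st.

(* randomized mechanism: a distribution over coin outcomes, each
   selecting a deterministic mechanism *)
Record rand_mech (C : finType) := RandMech {
  rm_prob : C -> R;
  rm_mech : C -> mtree }.

Definition universally_OSP (C : finType) (M : rand_mech C) : Prop :=
  forall c, 0 < rm_prob M c -> OSP (rm_mech M c).

End Tree.

Arguments Leaf {R n m Msg}.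
Arguments Node {R n m Msg}.

Section Auction.
Variables (R : realFieldType) (n m : nat).

Inductive amsg : Type :=
| Report of ('I_m -> R)      (* a bidder of S reports its values *)
| Accept of {set 'I_m}.      (* a bidder of U chooses items to buy *)

Definition getRep (x : amsg) : 'I_m -> R :=
  match x with Report r => r | Accept _ => fun _ => 0 end.
Definition getAcc (x : amsg) : {set 'I_m} :=
  match x with Accept A => A | Report _ => set0 end.

Variables (S : {set 'I_n}) (ord : seq 'I_n).

Definition Sseq : seq 'I_n := enum S.
Definition Useq : seq 'I_n := [seq k <- ord | k \notin S].

(* reported value of k in S for item j, read off the history *)
Definition rep_h (h : seq amsg) (k : 'I_n) (j : 'I_m) : R :=
  getRep (nth (Accept set0) h (index k Sseq)) j.

(* p_j = max_{k in S} reported v_kj  (0 if S is empty) *)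
Definition price (h : seq amsg) (j : 'I_m) : R :=
  \big[Num.max/0]_(k in S) rep_h h k j.

Definition sold (h : seq amsg) : {set 'I_m} :=
  \bigcup_(x <- drop (size Sseq) h) getAcc x.

Definition legal (i : 'I_n) (h : seq amsg) (x : amsg) : bool :=
  if i \in S then (match x with Report r => [forall j, 0 <= r j] | _ => false end)
  else (match x with Accept A => A \subset ~: sold h | _ => false end).

Definition alloc (h : seq amsg) (k : 'I_n) : {set 'I_m} :=
  if k \in S then set0
  else getAcc (nth (Accept set0) h (size Sseq + index k Useq)).

Definition pay (h : seq amsg) (k : 'I_n) : R :=
  \sum_(j in alloc h k) price h j.

Fixpoint build (sched : seq 'I_n) (h : seq amsg) : mtree R n m amsg :=
  match sched with
  | [::] => Leaf (alloc h) (pay h)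
  | i :: rest => Node i (legal i h) (fun x => build rest (rcons h x))
  end.

Definition auction_mech : mtree R n m amsg := build (Sseq ++ Useq) [::].

Definition auction_strat : strategy R n m amsg :=
  fun i v h =>
    if i \in S then Report v
    else Accept [set j | (j \notin sold h) &&
                   ((price h j < v j) ||
                    ((v j == price h j) &&
                     [forall k in S, (rep_h h k j == price h j) ==> (i < k)%N]))].

End Auction.

Definition prob_S (R : realFieldType) (n : nat) (S : {set 'I_n}) : R :=
  \prod_(i < n) (if i \in S then 1 / 2 else 1 - 1 / 2).

Definition auction_rm (R : realFieldType) (n m : nat) (ord : seq 'I_n)
  : rand_mech R n m (amsg R m) {set 'I_n} :=
  RandMech (@prob_S R n) (fun S => @auction_mech R n m S ord).

From HB Require Import structures.
From mathcomp Require Import all_boot all_order all_algebra.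
Import Order.TTheory GRing.Theory Num.Theory.
Local Open Scope ring_scope.

Set Implicit Arguments. Unset Strict Implicit.

(* The prices p_j are fixed by the reports of S, which all precede the moves
   of U.  A bidder of S gets nothing and pays nothing whatever happens.  A
   bidder i of U who, at her node, accepts a set A of unsold items ends with
   utility sum_(j in A) (v_ij - p_j), independently of anything done later;
   the prescribed set contains every unsold item with v_ij > p_j and only items
   with v_ij >= p_j, so it beats every other legal choice, even one evaluated
   against a different continuation.  This gives obvious dominance in every
   realisation of S, hence universal OSP. *)

Lemma ler_sum_pos_part (R : realDomainType) (I : finType) (f : I -> R)
    (A B : {set I}) :
  (forall j, j \in A -> 0 < f j -> j \in B) -> (forall j, j \in B -> 0 <= f j) ->
  \sum_(j in A) f j <= \sum_(j in B) f j.
Proof.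
move=> AposB Bge0; rewrite [leLHS]big_mkcond [leRHS]big_mkcond /=.
apply: ler_sum => j _; case: ifPn => jA; case: ifPn => jB //; last exact: Bge0.
by rewrite leNgt; apply/negP => /(AposB j jA); rewrite (negbTE jB).
Qed.

Lemma drop_cat_uniq_index (T : eqType) (s1 s2 : seq T) k x r :
  x \notin s1 -> uniq s2 -> drop k (s1 ++ s2) = x :: r ->
  k = (size s1 + index x s2)%N.
Proof.
move=> xNs1 uniq_s2; rewrite drop_cat; case: ltnP => [lt_k|le_k].
  by rewrite (drop_nth x lt_k) => -[nth_k _]; rewrite -nth_k mem_nth in xNs1.
move=> drop_k; have nth_k : nth x s2 (k - size s1) = x.
  by rewrite -[(k - _)%N]addn0 -nth_drop drop_k.
have lt_k : (k - size s1 < size s2)%N.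
  by rewrite ltnNge; apply/negP => /drop_oversize; rewrite drop_k.
by rewrite -{1}nth_k index_uniq // subnKC.
Qed.

Lemma play_through_node (R : realFieldType) (n m : nat) (Msg : Type)
    (t : mtree R n m Msg) (B : profile n Msg) h0 h s i leg nx :
  node_at t h = Some (Node i leg nx) -> (play t B h0).1 = h ++ s ->
  exists s', s = B i (h0 ++ h) :: s'.
Proof.
elim: h t h0 => [|x h IH] [a p|i' leg' nx'] h0 //=.
  by case=> <- _ _ <-; rewrite cats0; eexists.
case: ifP => // _ node_h [Ex path_h]; rewrite -cat_rcons.
by apply: IH node_h _; rewrite -Ex.
Qed.

Section Auction.
Variables (R : realFieldType) (n m : nat) (S : {set 'I_n}) (ord : seq 'I_n).

Local Notation build := (@build R n m S ord).
Local Notation mech := (@auction_mech R n m S ord).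
Local Notation schedule := (Sseq S ++ Useq S ord).

Lemma node_at_build sched h0 h t :
  node_at (build sched h0) h = Some t -> t = build (drop (size h) sched) (h0 ++ h).
Proof.
elim: h sched h0 => [|x h IH] [|a sched] h0 //=.
1,2: by case=> <-; rewrite cats0.
by case: ifP => // _ /IH ->; rewrite cat_rcons.
Qed.

Lemma play_build_outcome (B : profile n (amsg R m)) sched h0 :
  (play (build sched h0) B h0).2 =
    (alloc S ord (h0 ++ (play (build sched h0) B h0).1),
     pay S ord (h0 ++ (play (build sched h0) B h0).1)).
Proof.
elim: sched h0 => [|a sched IH] h0 /=; first by rewrite cats0.
by rewrite IH cat_rcons.
Qed.

Lemma utility_auction v k (B : profile n (amsg R m)) :
  utility mech v k B =
    \sum_(j in alloc S ord (path_of mech B) k) v j - pay S ord (path_of mech B) k.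
Proof. by rewrite /utility /bundle /payment play_build_outcome. Qed.

Lemma utility_auction_S v k (B : profile n (amsg R m)) :
  k \in S -> utility mech v k B = 0.
Proof. by move=> kS; rewrite utility_auction /pay /alloc kS !big_set0 subrr. Qed.

Lemma node_at_auction h i leg nx :
  node_at mech h = Some (Node i leg nx) ->
  leg = legal S i h /\ exists rest, drop (size h) schedule = i :: rest.
Proof.
move/node_at_build; case: (drop _ _) => [|a rest] //= [-> -> _].
by split; last by exists rest.
Qed.

Lemma price_cat (h t : seq (amsg R m)) :
  (size (Sseq S) <= size h)%N -> price S (h ++ t) =1 price S h.
Proof.
move=> le_S_h j; apply: eq_bigr => k kS.
by rewrite /rep_h nth_cat (leq_trans _ le_S_h) // index_mem mem_enum.
Qed.

Hypothesis uniq_ord : uniq ord.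

Lemma utility_auction_U v i (B : profile n (amsg R m)) h leg nx :
  node_at mech h = Some (Node i leg nx) -> i \notin S -> on_path mech B h ->
  utility mech v i B = \sum_(j in getAcc (B i h)) (v j - price S h j).
Proof.
move=> node_h iNS [s path_h].
have [_ [rest drop_h]] := node_at_auction node_h.
have [s' def_s] := play_through_node (h0 := [::]) node_h path_h.
have size_h : size h = (size (Sseq S) + index i (Useq S ord))%N.
  by apply: drop_cat_uniq_index drop_h; rewrite ?mem_enum ?filter_uniq.
rewrite utility_auction path_h def_s /pay /alloc (negbTE iNS) -size_h.
rewrite nth_cat ltnn subnn -sumrB; apply: eq_bigr => j _.
by rewrite price_cat // size_h leq_addr.
Qed.

Lemma auction_strat_legal i v : in_domain v -> valid_beh mech i (auction_strat S i v).
Proof.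
move=> v_ge0 h _ leg nx /node_at_auction[-> _] ->.
rewrite /legal /auction_strat; case: (i \in S) => /=; first exact/forallP.
by apply/subsetP => j; rewrite !inE => /andP[].
Qed.

Lemma auction_strat_obviously_dominant :
  obviously_dominant mech (@auction_strat R n m S).
Proof.
split=> [i v|i v _ h leg nx node_h B B' _ valid_B' on_h on_h' _].
  exact: auction_strat_legal.
have [iS|iNS] := boolP (i \in S); first by rewrite !utility_auction_S.
rewrite (utility_auction_U v node_h iNS on_h') (utility_auction_U v node_h iNS on_h).
have [leg_h _] := node_at_auction node_h.
have := valid_B' i h i leg nx node_h erefl; rewrite leg_h /legal (negbTE iNS).
rewrite /upd eqxx /auction_strat (negbTE iNS).
case: (B' i h) => [//|A] /= /subsetP A_unsold.
apply: ler_sum_pos_part => j; rewrite inE.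
  by move=> jA; rewrite subr_gt0 => ->; rewrite orTb andbT -in_setC A_unsold.
by case/andP=> _ /orP[/ltW|/andP[/eqP-> _]]; rewrite subr_ge0.
Qed.

End Auction.

Theorem lemma4p2 (R : realFieldType) (n m : nat) (ord : seq 'I_n)
  (Hord : perm_eq ord (enum 'I_n)) :
  universally_OSP (@auction_rm R n m ord) /\
  (forall S : {set 'I_n}, 0 < @prob_S R n S ->
     obviously_dominant (@auction_mech R n m S ord) (@auction_strat R n m S)).
Proof.
have uniq_ord : uniq ord by rewrite (perm_uniq Hord) enum_uniq.
have dominant S := auction_strat_obviously_dominant R m S uniq_ord.
by split=> S _; first exists (auction_strat S); apply: dominant.
Qed.
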